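(* Let $\mathcal G=(V,E,r)$ be a graph and $k\ge2$. (1) $\rho_k(\mathbf A(\mathcal G))\le (k-1)|V|+1$. (2) Equality holds in (1) if and only if $\mathcal G$ contains $k$ edge-disjoint spanning trees. In particular, in case of equality the graph $\mathcal G$ has edge-connectivity at least $k$.
   Context: A graph $\mathcal G=(V,E,r)$ consists of a finite vertex set $V$, a finite edge set $E$ disjoint from $V$, and a map $r$ assigning to each edge a two-element subset of $V$; multiple edges allowed, no loops. An agglomeration on $\mathcal G$ is a function $a\colon V\cup E\to\mathbb N_0$ with $a(v)\ge a(e)$ whenever $v$ is incident with $e$; $\mathbf A(\mathcal G)$ is the monoid of agglomerations under pointwise addition. For a reduced atomic monoid $H$ and $a\in H$, $\mathsf L(a)$ is the set of $n$ such that $a$ is a sum of $n$ atoms, and for $k\ge2$ the refined elasticity is $\rho_k(H)=\sup\{\sup\mathsf L(a): a\in H,\ k\in\mathsf L(a)\}$. *)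

From mathcomp Require Import all_boot.
Set Implicit Arguments. Unset Strict Implicit. Unset Printing Implicit Defensive.

(* A graph G = (V, E, r): V, E finite types (disjoint by construction), and
   r e the set of ends of the edge e (required to have exactly two elements). *)

Notation func V E := {ffun (V + E)%type -> nat}.

Definition addf (V E : finType) (a b : func V E) : func V E := [ffun x => a x + b x].
Definition zerof (V E : finType) : func V E := [ffun => 0].

Definition is_agg (V E : finType) (r : E -> {set V}) (a : func V E) : Prop :=
  forall (v : V) (e : E), v \in r e -> a (inr e) <= a (inl v).

(* Atoms of the reduced monoid A(G) (the only unit is 0). *)
Definition is_atom (V E : finType) (r : E -> {set V}) (a : func V E) : Prop :=
  [/\ is_agg r a, a <> zerof V E &
     forall b c, is_agg r b -> is_agg r c -> a = addf b c ->
       b = zerof V E \/ c = zerof V E].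

Definition in_lengths (V E : finType) (r : E -> {set V}) (a : func V E) (n : nat) : Prop :=
  exists s : seq (func V E),
    [/\ size s = n, (forall x, x \in s -> is_atom r x) & a = foldr (@addf V E) (zerof V E) s].

(* { sup L(a) : a in A(G), k in L(a) } flattened: n such that n, k in L(a) for some a *)
Definition rho_set (V E : finType) (r : E -> {set V}) (k n : nat) : Prop :=
  exists a, [/\ is_agg r a, in_lengths r a k & in_lengths r a n].

(* m is the supremum (in N) of a set of naturals; sup of the empty set is 0. *)
Definition is_sup_nat (S : nat -> Prop) (m : nat) : Prop :=
  (forall n, S n -> n <= m) /\ (forall m', (forall n, S n -> n <= m') -> m <= m').

Definition rho_eq (V E : finType) (r : E -> {set V}) (k m : nat) : Prop :=
  is_sup_nat (rho_set r k) m.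

Definition adjT (V E : finType) (r : E -> {set V}) (T : {set E}) : rel V :=
  fun u w => [exists e in T, [&& u \in r e, w \in r e & u != w]].

(* (V, T) is connected (a connected graph is nonempty) *)
Definition connectedT (V E : finType) (r : E -> {set V}) (T : {set E}) : Prop :=
  (exists v : V, True) /\ forall u w : V, connect (adjT r T) u w.

Definition acyclicT (V E : finType) (r : E -> {set V}) (T : {set E}) : Prop :=
  forall e, e \in T -> forall u w, u \in r e -> w \in r e ->
    connect (adjT r (T :\ e)) u w -> u = w.

Definition spanning_tree (V E : finType) (r : E -> {set V}) (T : {set E}) : Prop :=
  connectedT r T /\ acyclicT r T.

Definition has_k_edge_disjoint_spanning_trees (V E : finType) (r : E -> {set V}) (k : nat) : Prop :=
  exists Ts : 'I_k -> {set E},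
    (forall i, spanning_tree r (Ts i)) /\
    (forall i j, i != j -> [disjoint Ts i & Ts j]).

Definition edge_conn_ge (V E : finType) (r : E -> {set V}) (k : nat) : Prop :=
  forall F : {set E}, #|F| < k -> connectedT r (~: F).

From mathcomp Require Import all_boot zify.
From Stdlib Require Import Classical_Prop.
Set Implicit Arguments. Unset Strict Implicit. Unset Printing Implicit Defensive.

(* Atoms of A(G) are the 0/1-valued agglomerations with connected support.  Let
   a = x_1 + ... + x_k = y_1 + ... + y_n be two factorizations into atoms, and let c be
   the number of classes of the partition of V generated by the vertex sets of the y_j.
   Counting vertex weights, sum_i |V(x_i)| = sum_j |V(y_j)| >= n + |V| - c.  Every edge
   of an x_i is an edge of some y_j, so each V(x_i) lies in a single class and
   c <= |V| - max_i |V(x_i)| + 1; hence n <= (k - 1) max_i |V(x_i)| + 1 <= (k - 1)|V| + 1.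
   In case of equality every x_i spans V, and no edge carries weight 2, since two y_j
   through one edge would identify one more pair of vertices.  So the edge sets of the
   x_i are disjoint connected spanning subgraphs, each containing a spanning tree.
   Conversely, k edge-disjoint spanning trees T_i give
   sum_i 1_{T_i} = 1_{T_1 u ... u T_k} + (k - 1) sum_v 1_v. *)

Lemma connect_invariant (T : finType) (U : Type) (e : rel T) (f : T -> U) :
  (forall x y, e x y -> f x = f y) -> forall x y, connect e x y -> f x = f y.
Proof.
move=> fe x y /connectP [q]; elim: q x => [|z q IH] x /=; first by move=> _ ->.
by case/andP=> /fe -> /IH.
Qed.

Lemma is_sup_nat_attained (S : nat -> Prop) m :
  (forall n, S n -> n <= m) -> 0 < m -> is_sup_nat S m <-> S m.
Proof.
move=> ub m_gt0; split=> [[_ least] | Sm]; last by split=> // m' /(_ m Sm).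
apply: NNPP => notSm; suff: m <= m.-1 by rewrite -ltnS prednK // ltnn.
apply: least => n Sn; rewrite -ltnS prednK // ltn_neqAle ub // andbT.
by apply: contra_notN notSm => /eqP <-.
Qed.

Lemma sum_le_size_max (T : eqType) (s : seq T) (F : T -> nat) :
  \sum_(x <- s) F x <= size s * \max_(x <- s) F x.
Proof.
rewrite -sum1_size big_distrl /= big_seq [X in _ <= X]big_seq.
by apply: leq_sum => x xs; rewrite mul1n (leq_bigmax_seq x).
Qed.

Lemma leq_nth_add_sum (T : Type) (x0 : T) (s : seq T) (F : T -> nat) i j :
  i < size s -> j < size s -> i != j ->
  F (nth x0 s i) + F (nth x0 s j) <= \sum_(x <- s) F x.
Proof.
move=> lt_i lt_j ij; rewrite (big_nth x0) big_mkord (bigD1 (Ordinal lt_i)) //=.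
by rewrite (bigD1 (Ordinal lt_j)) ?leq_add2l ?leq_addr // -val_eqE /= eq_sym.
Qed.

Section MergeBlocks.
Variable V : finType.

(* A map [p : V -> V] stands for the partition of [V] into its fibres;
   [merge p S s0] fuses all the classes meeting [S]. *)
Definition merge (p : V -> V) (S : {set V}) (s0 : V) : V -> V :=
  fun w => if p w \in p @: S then p s0 else p w.

Lemma card_merge (p : V -> V) (S : {set V}) (s0 : V) : s0 \in S ->
  #|p @: setT| + 1 <= #|merge p S s0 @: setT| + #|p @: S|.
Proof.
move=> S_s0; set q := merge p S s0.
have sub : p s0 |: ((p @: setT) :\: (p @: S)) \subset q @: setT.
  apply/subsetP => y; rewrite in_setU1 => /predU1P [-> | ].
    by apply/imsetP; exists s0 => //; rewrite /q /merge imset_f.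
  rewrite inE => /andP [pSy /imsetP [w _ def_y]]; rewrite def_y in pSy *.
  by apply/imsetP; exists w => //; rewrite /q /merge (negbTE pSy).
have := subset_leq_card sub; rewrite cardsU1 inE imset_f //=.
have := cardsID (p @: S) (p @: setT).
have := subset_leq_card (subsetIr (p @: setT) (p @: S)).
lia.
Qed.

Lemma merge_blocks (s : seq {set V}) (p0 : V -> V) :
  exists p : V -> V,
    [/\ forall S, S \in s -> {in S &, forall x y, p x = p y},
        forall x y, p0 x = p0 y -> p x = p y &
        #|p0 @: setT| <= #|p @: setT| + \sum_(S <- s) (#|S| - 1)].
Proof.
elim: s p0 => [|S s IH] p0; first by exists p0; rewrite big_nil addn0.
have [-> | [s0 S_s0]] := set_0Vmem S.
  have [p [p_const p_coarse p_card]] := IH p0.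
  exists p; split=> //; last by rewrite big_cons cards0.
  by move=> T; rewrite inE => /predU1P [-> x y | /p_const]; rewrite ?inE.
have [p [p_const p_coarse p_card]] := IH (merge p0 S s0).
exists p; split.
- move=> T; rewrite inE => /predU1P [-> x y Sx Sy | /p_const //].
  by apply: p_coarse; rewrite /merge !imset_f.
- by move=> x y p0xy; apply: p_coarse; rewrite /merge p0xy.
- have := card_merge p0 S_s0; have := leq_imset_card p0 S.
  have : 0 < #|S| by apply/card_gt0P; exists s0.
  rewrite big_cons; lia.
Qed.

End MergeBlocks.

Section Agglomerations.
Variables (V E : finType) (r : E -> {set V}).
Local Notation sumf := (foldr (@addf V E) (zerof V E)).

Definition vsupp (x : func V E) : {set V} := [set v | x (inl v) != 0].
Definition esupp (x : func V E) : {set E} := [set e | x (inr e) != 0].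

Lemma sumfE s z : sumf s z = \sum_(x <- s) x z.
Proof.
elim: s => [|y s IH] /=; first by rewrite big_nil /zerof ffunE.
by rewrite big_cons /addf ffunE IH.
Qed.

Lemma sumf_neq0 s z : (sumf s z != 0) = has (fun x : func V E => x z != 0) s.
Proof. by rewrite sumfE sum_nat_seq_neq0. Qed.

Lemma agg_sumf s : (forall x, x \in s -> is_agg r x) -> is_agg r (sumf s).
Proof.
move=> aggs v e ve; rewrite !sumfE big_seq [X in _ <= X]big_seq.
by apply: leq_sum => x xs; apply: aggs.
Qed.

Lemma atom_agg x : is_atom r x -> is_agg r x.
Proof. by case. Qed.

Lemma agg_ends_vsupp x e : is_agg r x -> e \in esupp x -> r e \subset vsupp x.
Proof.
move=> aggx; rewrite inE -lt0n => xe; apply/subsetP => v ve.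
by rewrite inE -lt0n (leq_trans xe) ?aggx.
Qed.

Lemma atom_le1 x z : is_atom r x -> x z <= 1.
Proof.
case=> aggx x_neq0 x_irr; rewrite leqNgt; apply/negP => x_gt1.
pose b : func V E := [ffun y => minn (x y) 1].
pose c : func V E := [ffun y => x y - minn (x y) 1].
have aggb : is_agg r b by move=> v e ve; rewrite !ffunE; have := aggx v e ve; lia.
have aggc : is_agg r c by move=> v e ve; rewrite !ffunE; have := aggx v e ve; lia.
have x_bc : x = addf b c by apply/ffunP => y; rewrite !ffunE subnKC // geq_minl.
by case: (x_irr b c aggb aggc x_bc) => /ffunP/(_ z); rewrite !ffunE; lia.
Qed.

Lemma atom_connect x : is_atom r x ->
  {in vsupp x &, forall u w, connect (adjT r (esupp x)) u w}.
Proof.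
case=> aggx _ x_irr u w; rewrite !inE => xu xw.
pose C := [pred v | connect (adjT r (esupp x)) u v].
pose inC (y : V + E) := match y with inl v => C v | inr e => [exists v in r e, C v] end.
pose b : func V E := [ffun y => if inC y then x y else 0].
pose c : func V E := [ffun y => if inC y then 0 else x y].
have aggb : is_agg r b.
  move=> v e ve; rewrite !ffunE /=; case: ifP => // /existsP [v' /andP [v'e Cv']].
  have [-> // | xe] := eqVneq (x (inr e)) 0.
  suff Cv : connect (adjT r (esupp x)) u v by rewrite Cv; exact: aggx.
  have [<- // | v'v] := eqVneq v' v.
  apply: connect_trans Cv' (connect1 _); apply/existsP; exists e.
  by rewrite inE xe v'e ve v'v.
have aggc : is_agg r c.
  move=> v e ve; rewrite !ffunE /=; case: ifP => // /existsPn notC.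
  by have := notC v; rewrite ve /= => /negbTE ->; exact: aggx.
have x_bc : x = addf b c.
  by apply/ffunP => y; rewrite !ffunE; case: (inC y); rewrite ?addn0.
case: (x_irr b c aggb aggc x_bc) => /ffunP bc0.
  by have := bc0 (inl u); rewrite !ffunE /= connect0 => xu0; rewrite xu0 in xu.
by have := bc0 (inl w); rewrite !ffunE /=; case: ifP => // _ xw0; rewrite xw0 in xw.
Qed.

Lemma vsupp_card_sum x : is_atom r x -> \sum_v x (inl v) = #|vsupp x|.
Proof.
move=> atx; rewrite -sum1_card [RHS]big_mkcond; apply: eq_bigr => v _.
by rewrite inE; have := atom_le1 (inl v) atx; case: (x (inl v)) => [|[|]].
Qed.

Lemma sum_vertices_factorization a s : (forall x, x \in s -> is_atom r x) ->
  a = sumf s -> \sum_v a (inl v) = \sum_(x <- s) #|vsupp x|.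
Proof.
move=> atoms ->; under eq_bigr do rewrite sumfE.
by rewrite exchange_big /=; apply: eq_big_seq => x xs; exact: vsupp_card_sum (atoms x xs).
Qed.

Definition spanning_ind (F : {set E}) : func V E :=
  [ffun z => if z is inr e then (e \in F : nat) else 1].

Definition vertex_ind (v : V) : func V E := [ffun z => (z == inl v : nat)].

Lemma adjT_sym (F : {set E}) : symmetric (adjT r F).
Proof.
move=> u w; apply/idP/idP => /existsP [e /and4P [eF ue we uw]];
  by apply/existsP; exists e; rewrite eF ue we eq_sym uw.
Qed.

Lemma connect_adjT_sub (F G : {set E}) (u w : V) : F \subset G ->
  connect (adjT r F) u w -> connect (adjT r G) u w.
Proof.
move=> FG; apply: connect_sub => y z /existsP [e /and4P [eF ye ze yz]].
by apply: connect1; apply/existsP; exists e; rewrite (subsetP FG e eF) ye ze yz.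
Qed.

Lemma connectedT_sub (F G : {set E}) : F \subset G -> connectedT r F -> connectedT r G.
Proof. by move=> FG [V0 connF]; split=> // u w; exact: connect_adjT_sub (connF u w). Qed.

Hypothesis hr : forall e, #|r e| = 2.

Lemma agg_eq0 x : is_agg r x -> (forall v, x (inl v) = 0) -> x = zerof V E.
Proof.
move=> aggx x0; apply/ffunP => -[v | e]; rewrite ffunE ?x0 //.
have /card_gt0P [v ve] : 0 < #|r e| by rewrite hr.
by apply/eqP; rewrite -leqn0 -(x0 v) aggx.
Qed.

Lemma atom_vsupp_neq0 x : is_atom r x -> vsupp x != set0.
Proof.
case=> aggx x_neq0 _; apply/negP => /eqP vx0; apply: x_neq0.
apply: agg_eq0 => // v; apply/eqP; apply: contraFT (in_set0 v) => xv.
by rewrite -vx0 inE.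
Qed.

Lemma connected_indicator_atom x :
  is_agg r x -> (forall z, x z <= 1) -> vsupp x != set0 ->
  {in vsupp x &, forall u w, connect (adjT r (esupp x)) u w} -> is_atom r x.
Proof.
move=> aggx x_le1 /set0Pn [v0 xv0] conn; split=> //.
  by move/ffunP/(_ (inl v0)); rewrite ffunE => /eqP; move: xv0; rewrite inE => /negbTE ->.
move=> b c aggb aggc x_bc.
have bcE z : x z = b z + c z by rewrite x_bc ffunE.
have b_spread y z e : e \in esupp x -> y \in r e -> z \in r e ->
    b (inl y) != 0 -> b (inl z) != 0.
  move=> xe ye ze; have := aggc y e ye; have := aggb z e ze; have := x_le1 (inl y).
  by move: xe; rewrite inE !bcE; lia.
have b_inv u w : connect (adjT r (esupp x)) u w -> (b (inl u) != 0) = (b (inl w) != 0).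
  apply: (connect_invariant (f := fun v => b (inl v) != 0)) => y z.
  case/existsP => e /and4P [xe ye ze _].
  by apply/idP/idP; [exact: b_spread ye ze | exact: b_spread ze ye].
have out0 u : u \notin vsupp x -> b (inl u) = 0 /\ c (inl u) = 0.
  by rewrite inE negbK bcE; lia.
have [bv0 | bv0] := eqVneq (b (inl v0)) 0; [left | right]; apply: agg_eq0 => // u;
  have [xu | /out0 [] //] := boolP (u \in vsupp x); have := b_inv _ _ (conn _ _ xv0 xu).
  by rewrite bv0 eqxx => /esym/negbFE/eqP.
by have := x_le1 (inl u); rewrite bcE; lia.
Qed.

Lemma esupp_spanning_ind F : esupp (spanning_ind F) = F.
Proof. by apply/setP => e; rewrite !inE ffunE; case: (e \in F). Qed.

Lemma spanning_ind_atom F : connectedT r F -> is_atom r (spanning_ind F).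
Proof.
move=> [[v0 _] connF]; apply: connected_indicator_atom.
- by move=> v e _; rewrite !ffunE leq_b1.
- by case=> [v | e]; rewrite ffunE ?leq_b1.
- by apply/set0Pn; exists v0; rewrite inE ffunE.
- by move=> u w _ _; rewrite esupp_spanning_ind.
Qed.

Lemma vertex_ind_atom v : is_atom r (vertex_ind v).
Proof.
apply: connected_indicator_atom.
- by move=> u e _; rewrite !ffunE.
- by move=> z; rewrite ffunE leq_b1.
- by apply/set0Pn; exists v; rewrite inE ffunE eqxx.
- by move=> u w; rewrite !inE !ffunE !eqb0 !negbK => /eqP [->] /eqP [->].
Qed.

Lemma ends_eq u w e z :
  u \in r e -> w \in r e -> u != w -> z \in r e -> (z == u) || (z == w).
Proof.
move=> ue we uw ze; have /cards2P [u' [w' [_ def_e]]] : #|r e| == 2 by rewrite hr.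
by move: ue we ze uw; rewrite def_e !inE => /pred2P [] -> /pred2P [] -> /pred2P [] ->;
  rewrite ?eqxx ?orbT.
Qed.

Lemma minimal_connectedT_acyclic T : connectedT r T ->
  (forall T' : {set E}, T' \subset T -> connectedT r T' -> #|T| <= #|T'|) -> acyclicT r T.
Proof.
move=> [V0 connT] Tmin e eT u w ue we conn_uw; apply/eqP; apply: contraT => uw.
have connTe : connectedT r (T :\ e).
  split=> // y z; apply: connect_sub (connT y z) => y' z'.
  case/existsP => e' /and4P [e'T y'e' z'e' y'z'].
  have [e'e | e'e] := eqVneq e' e; last first.
    by apply: connect1; apply/existsP; exists e'; rewrite !inE e'e e'T y'e' z'e' y'z'.
  rewrite {e'T}e'e in y'e' z'e'.
  have conn_wu : connect (adjT r (T :\ e)) w u by rewrite (sym_connect_sym (@adjT_sym _)).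
  by case/pred2P: (ends_eq ue we uw y'e') => ->; case/pred2P: (ends_eq ue we uw z'e') => ->;
    rewrite ?connect0.
have := Tmin _ (subD1set T e) connTe.
by rewrite (cardsD1 e T) eT ltnn.
Qed.

Lemma connectedT_spanning_tree F : connectedT r F ->
  exists2 T : {set E}, T \subset F & spanning_tree r T.
Proof.
move=> [V0 connF].
pose P (T : {set E}) := (T \subset F) && [forall u, forall w, connect (adjT r T) u w].
have PF : P F by rewrite /P subxx; apply/forallP => u; apply/forallP => w; exact: connF.
case: (arg_minnP (fun T : {set E} => #|T|) PF) => T /andP [TF /forallP connT] Tmin.
have connectedT_T : connectedT r T by split=> // u w; exact: (forallP (connT u) w).
exists T => //; split=> //; apply: minimal_connectedT_acyclic => // T' T'T [_ connT'].
apply: Tmin; rewrite /P (subset_trans T'T TF).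
by apply/forallP => u; apply/forallP => w; exact: connT'.
Qed.

Section Factorizations.
Variables (a : func V E) (sA sL : seq (func V E)).
Hypotheses (atomsA : forall x, x \in sA -> is_atom r x)
           (atomsL : forall x, x \in sL -> is_atom r x).
Hypotheses (a_sA : a = sumf sA) (a_sL : a = sumf sL).

Section Classes.
Variable p : V -> V.
Hypothesis p_constL : forall x, x \in sL -> {in vsupp x &, forall u w, p u = p w}.

Lemma p_constA x : x \in sA -> {in vsupp x &, forall u w, p u = p w}.
Proof.
move=> xA u w xu xw; apply: connect_invariant (atom_connect (atomsA xA) xu xw).
move=> y z /existsP [e /and4P [xe ye ze _]].
have /hasP [x' x'L x'e] : has (fun x' : func V E => x' (inr e) != 0) sL.
  by rewrite -sumf_neq0 -a_sL a_sA sumf_neq0; apply/hasP; exists x; rewrite // inE in xe.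
have /subsetP x'_ends : r e \subset vsupp x'.
  by apply: agg_ends_vsupp (atom_agg (atomsL x'L)) _; rewrite inE.
exact: p_constL x'L y z (x'_ends y ye) (x'_ends z ze).
Qed.

Lemma card_classes_vsupp x : x \in sA -> #|p @: setT| + #|vsupp x| <= #|V| + 1.
Proof.
move=> xA; have /set0Pn [u xu] := atom_vsupp_neq0 (atomsA xA).
have sub : p @: setT \subset p u |: p @: ~: vsupp x.
  apply/subsetP => _ /imsetP [w _ ->]; rewrite in_setU1.
  have [xw | xw] := boolP (w \in vsupp x); first by rewrite (p_constA xA xw xu) eqxx.
  by rewrite imset_f ?orbT // inE.
have := subset_leq_card sub; rewrite cardsU1.
have := leq_imset_card p (~: vsupp x); have := cardsC (vsupp x).
case: (_ \notin _) => /=; lia.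
Qed.

Lemma length_add_max_le d :
  #|V| + d <= #|p @: setT| + \sum_(x <- sL) (#|vsupp x| - 1) ->
  size sL + d + \max_(x <- sA) #|vsupp x| <= \sum_(x <- sA) #|vsupp x| + 1.
Proof.
move=> merged.
have sumL : \sum_(x <- sL) #|vsupp x| = size sL + \sum_(x <- sL) (#|vsupp x| - 1).
  rewrite -sum1_size -big_split /=; apply: eq_big_seq => x xL.
  by rewrite subnKC // card_gt0; exact: atom_vsupp_neq0 (atomsL xL).
have maxA : #|p @: setT| + \max_(x <- sA) #|vsupp x| <= #|V| + 1.
  have classes_le : #|p @: setT| <= #|V| + 1.
    by apply: leq_trans (leq_imset_card p setT) _; rewrite cardsT leq_addr.
  rewrite -leq_subRL //; apply/bigmax_leqP_seq => x xA _.
  by rewrite leq_subRL // card_classes_vsupp.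
have sumA : \sum_v a (inl v) = \sum_(x <- sA) #|vsupp x|.
  exact: sum_vertices_factorization atomsA a_sA.
have sumL' : \sum_v a (inl v) = \sum_(x <- sL) #|vsupp x|.
  exact: sum_vertices_factorization atomsL a_sL.
lia.
Qed.

Lemma length_le_classes d :
  #|V| + d <= #|p @: setT| + \sum_(x <- sL) (#|vsupp x| - 1) ->
  size sL + d <= (size sA - 1) * #|V| + 1.
Proof.
move=> /length_add_max_le len_le.
have sum_le : \sum_(x <- sA) #|vsupp x| <= size sA * \max_(x <- sA) #|vsupp x|.
  exact: sum_le_size_max.
have max_le : \max_(x <- sA) #|vsupp x| <= #|V|.
  by apply/bigmax_leqP_seq => x _ _; exact: max_card.
nia.
Qed.

Lemma full_vsupp_of_length_eq :
  #|V| <= #|p @: setT| + \sum_(x <- sL) (#|vsupp x| - 1) ->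
  size sL = (size sA - 1) * #|V| + 1 -> 1 < size sA ->
  forall x, x \in sA -> vsupp x = setT.
Proof.
move=> merged lenL sA_gt1.
have len_le : size sL + \max_(x <- sA) #|vsupp x| <= \sum_(x <- sA) #|vsupp x| + 1.
  by have := length_add_max_le (d := 0); rewrite !addn0; apply.
have sum_le : \sum_(x <- sA) #|vsupp x| <= size sA * \max_(x <- sA) #|vsupp x|.
  exact: sum_le_size_max.
have max_le : \max_(x <- sA) #|vsupp x| <= #|V|.
  by apply/bigmax_leqP_seq => x _ _; exact: max_card.
have sumA : size sA * #|V| <= \sum_(x <- sA) #|vsupp x| by nia.
have : \sum_(x <- sA) (#|V| - #|vsupp x|) == 0.
  rewrite sumnB => [|x _]; last exact: max_card.
  by rewrite big_const_seq count_predT iter_addn_0 mulnC subn_eq0.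
rewrite sum_nat_seq_eq0 => /allP vsupp_full x xA.
apply/eqP; rewrite eqEcard subsetT cardsT.
by have := vsupp_full x xA; rewrite subn_eq0.
Qed.

End Classes.

Lemma exists_classes : exists p : V -> V,
  (forall x, x \in sL -> {in vsupp x &, forall u w, p u = p w}) /\
  #|V| <= #|p @: setT| + \sum_(x <- sL) (#|vsupp x| - 1).
Proof.
have [p [p_const _ p_card]] := merge_blocks (map vsupp sL) id.
exists p; split; last by rewrite imset_id cardsT big_map in p_card.
by move=> x xL; apply: p_const; exact: map_f.
Qed.

Lemma factorization_length_le : size sL <= (size sA - 1) * #|V| + 1.
Proof.
have [p [p_const p_card]] := exists_classes.
by have := length_le_classes p_const (d := 0); rewrite !addn0; apply.
Qed.

Lemma exists_classes_shared_edge x1 x2 rest e :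
  perm_eq sL [:: x1, x2 & rest] -> e \in esupp x1 -> e \in esupp x2 ->
  exists p : V -> V,
    (forall x, x \in sL -> {in vsupp x &, forall u w, p u = p w}) /\
    #|V| + 1 <= #|p @: setT| + \sum_(x <- sL) (#|vsupp x| - 1).
Proof.
move=> perm_sL x1e x2e.
have x1L : x1 \in sL by rewrite (perm_mem perm_sL) mem_head.
have x2L : x2 \in sL by rewrite (perm_mem perm_sL) !inE eqxx orbT.
have /cards2P [u [w [uw def_e]]] : #|r e| == 2 by rewrite hr.
have /subsetP x1_ends := agg_ends_vsupp (atom_agg (atomsL x1L)) x1e.
have /subsetP x2_ends := agg_ends_vsupp (atom_agg (atomsL x2L)) x2e.
have [x1u x1w] : u \in vsupp x1 /\ w \in vsupp x1 by rewrite !x1_ends // def_e !inE eqxx ?orbT.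
have [x2u x2w] : u \in vsupp x2 /\ w \in vsupp x2 by rewrite !x2_ends // def_e !inE eqxx ?orbT.
(* [u] and [w] are already identified through [x1], so for [x2] it suffices to merge
   [vsupp x2 :\ u], which saves one class. *)
have [p [p_const _ p_card]] := merge_blocks [:: vsupp x1, vsupp x2 :\ u & map vsupp rest] id.
have pw y : y \in vsupp x2 -> p y = p w.
  have [-> _ | yu x2y] := eqVneq y u; first exact: p_const (mem_head _ _) _ _ x1u x1w.
  have mem2 : vsupp x2 :\ u \in [:: vsupp x1, vsupp x2 :\ u & map vsupp rest].
    by rewrite !inE eqxx orbT.
  by apply: (p_const _ mem2); rewrite in_setD1 ?yu ?x2y // eq_sym uw x2w.
exists p; split.
  move=> x; rewrite (perm_mem perm_sL) !inE => /or3P [/eqP -> | /eqP -> | x_rest] y z xy xz.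
  - exact: p_const (mem_head _ _) _ _ xy xz.
  - by rewrite (pw y xy) (pw z xz).
  - by apply: (p_const (vsupp x)) => //; rewrite !inE map_f ?orbT.
move: p_card; rewrite (perm_big _ perm_sL) imset_id cardsT !big_cons big_map.
have := cardsD1 u (vsupp x2); rewrite x2u /=.
have : 0 < #|vsupp x2 :\ u| by apply/card_gt0P; exists w; rewrite in_setD1 eq_sym uw x2w.
lia.
Qed.

Hypothesis lengthL : size sL = (size sA - 1) * #|V| + 1.

Lemma extremal_full_vsupp : 1 < size sA -> forall x, x \in sA -> vsupp x = setT.
Proof.
have [p [p_const p_card]] := exists_classes.
exact: full_vsupp_of_length_eq p_const p_card lengthL.
Qed.

Lemma extremal_edge_le1 e : a (inr e) <= 1.
Proof.
rewrite leqNgt; apply/negP => a_e_gt1.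
pose P (x : func V E) := x (inr e) != 0.
have : 1 < count P sL.
  apply: leq_trans a_e_gt1 _; rewrite a_sL sumfE -sum1_count [X in _ <= X]big_mkcond.
  rewrite big_seq [X in _ <= X]big_seq; apply: leq_sum => x xL.
  by rewrite /P; have := atom_le1 (inr e) (atomsL xL); case: (x (inr e)) => [|[|]].
rewrite -size_filter; case def_s: (filter P sL) => [|x1 [|x2 rest]] // _.
have perm_sL : perm_eq sL [:: x1, x2 & rest ++ filter (predC P) sL].
  by rewrite -(perm_filterC P sL) def_s.
have Px y : y \in filter P sL -> y (inr e) != 0 by rewrite mem_filter => /andP [].
have x1e : e \in esupp x1 by rewrite inE Px // def_s mem_head.
have x2e : e \in esupp x2 by rewrite inE Px // def_s !inE eqxx orbT.
have [p [p_const p_card]] := exists_classes_shared_edge perm_sL x1e x2e.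
by have := length_le_classes p_const p_card; rewrite lengthL addn1 ltnn.
Qed.

End Factorizations.

Lemma rho_set_le k n : rho_set r k n -> n <= (k - 1) * #|V| + 1.
Proof.
case=> a [_ [sA [<- atomsA a_sA]] [sL [<- atomsL a_sL]]].
exact: factorization_length_le atomsA atomsL a_sA a_sL.
Qed.

Lemma rho_set_trees k : 1 < k ->
  rho_set r k ((k - 1) * #|V| + 1) -> has_k_edge_disjoint_spanning_trees r k.
Proof.
move=> k_gt1 [a [_ [sA [sizeA atomsA a_sA]] [sL [sizeL atomsL a_sL]]]].
have lengthL : size sL = (size sA - 1) * #|V| + 1 by rewrite sizeA.
have full := extremal_full_vsupp atomsA atomsL a_sA a_sL lengthL.
have a_le1 := extremal_edge_le1 atomsA atomsL a_sA a_sL lengthL.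
pose X (i : 'I_k) := nth (zerof V E) sA i.
have XA i : X i \in sA by rewrite mem_nth ?sizeA.
have connX i : connectedT r (esupp (X i)).
  have /set0Pn [v _] := atom_vsupp_neq0 (atomsA _ (XA i)).
  have Xfull : vsupp (X i) = setT by apply: full; rewrite ?sizeA ?XA.
  split=> [|u w]; first by exists v.
  by apply: (atom_connect (atomsA _ (XA i))); rewrite Xfull inE.
have [Ts TsX Ts_tree] := fin_all_exists2 (fun i => connectedT_spanning_tree (connX i)).
exists Ts; split=> // i j ij; rewrite -setI_eq0; apply/set0Pn => -[e /setIP [ei ej]].
have ltA (l : 'I_k) : l < size sA by rewrite sizeA.
have := leq_nth_add_sum (zerof V E) (fun x => x (inr e)) (ltA i) (ltA j) ij.
rewrite -sumfE -a_sA; have := subsetP (TsX i) e ei; have := subsetP (TsX j) e ej.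
by rewrite /X !inE -!lt0n; have := a_le1 e; lia.
Qed.

Lemma sum_spanning_ind_trees k (Ts : 'I_k -> {set E}) : 0 < k ->
  (forall i j, i != j -> [disjoint Ts i & Ts j]) ->
  sumf [seq spanning_ind (Ts i) | i <- enum 'I_k] =
  sumf (spanning_ind (\bigcup_i Ts i) :: [seq vertex_ind v | v <- enum V, _ <- iota 0 k.-1]).
Proof.
move=> k_gt0 Ts_disj.
apply/ffunP => -[w | e]; rewrite !sumfE big_map big_cons big_allpairs_dep !ffunE.
  under eq_bigr do rewrite ffunE.
  rewrite !big_enum /= sum_nat_const card_ord muln1 (bigD1 w) //=.
  rewrite [X in _ + (_ + X)]big1 => [|v vw]; last first.
    by rewrite big1 // => _ _; rewrite ffunE; case: eqP => // -[wv]; rewrite wv eqxx in vw.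
  rewrite big_const_seq count_predT size_iota iter_addn_0 ffunE eqxx mul1n.
  by rewrite addn0 add1n prednK.
rewrite [X in _ + X]big1 => [|v _]; last by rewrite big1 // => _ _; rewrite ffunE.
under eq_bigr do rewrite ffunE.
rewrite big_enum /= addn0.
have [/bigcupP [i _ ei] | notU] := boolP (e \in \bigcup_i Ts i).
  rewrite (bigD1 i) //= ei big1 // => j ji.
  by rewrite (disjointFl (Ts_disj _ _ ji) ei).
rewrite big1 // => i _; apply/eqP; rewrite eqb0; apply: contra notU => ei.
by apply/bigcupP; exists i.
Qed.

Lemma trees_rho_set k : 0 < k ->
  has_k_edge_disjoint_spanning_trees r k -> rho_set r k ((k - 1) * #|V| + 1).
Proof.
move=> k_gt0 [Ts [Ts_tree Ts_disj]].
have connTs i : connectedT r (Ts i) by case: (Ts_tree i).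
pose sA := [seq spanning_ind (Ts i) | i <- enum 'I_k].
have atomsA x : x \in sA -> is_atom r x by case/mapP => i _ ->; exact: spanning_ind_atom.
exists (sumf sA); split.
- by apply: agg_sumf => x /atomsA /atom_agg.
- by exists sA; split=> //; rewrite size_map size_enum_ord.
exists (spanning_ind (\bigcup_i Ts i) :: [seq vertex_ind v | v <- enum V, _ <- iota 0 k.-1]).
split; last exact: sum_spanning_ind_trees.
  by rewrite /= size_allpairs size_iota -cardE addn1 mulnC subn1.
move=> x; rewrite inE => /predU1P [-> | /allpairsP [[v ?] [_ _ ->]]]; last first.
  exact: vertex_ind_atom.
apply: spanning_ind_atom; apply: connectedT_sub (connTs (Ordinal k_gt0)).
exact: bigcup_sup.
Qed.

Lemma trees_edge_conn k : has_k_edge_disjoint_spanning_trees r k -> edge_conn_ge r k.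
Proof.
move=> [Ts [Ts_tree Ts_disj]] F F_lt_k.
have [/existsP [i TiF] | /existsPn meetF] := boolP [exists i, [disjoint Ts i & F]].
  by apply: connectedT_sub (proj1 (Ts_tree i)); rewrite -disjoints_subset.
have /fin_all_exists [f fTsF] : forall i, exists e, e \in Ts i :&: F.
  by move=> i; apply/set0Pn; rewrite setI_eq0 meetF.
have f_inj : injective f.
  move=> i j fij; apply/eqP; apply: contraT => ij.
  have /setIP [fi _] := fTsF i; have /setIP [fj _] := fTsF j.
  by rewrite fij in fi; rewrite (disjointFr (Ts_disj _ _ ij) fi) in fj.
have : f @: setT \subset F by apply/subsetP => _ /imsetP [i _ ->]; case/setIP: (fTsF i).
by move/subset_leq_card; rewrite card_imset // cardsT card_ord leqNgt F_lt_k.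
Qed.

End Agglomerations.

Theorem theorem4p15 (V E : finType) (r : E -> {set V})
    (hr : forall e : E, #|r e| = 2) (k : nat) (hk : 2 <= k) :
  (forall n, rho_set r k n -> n <= (k - 1) * #|V| + 1)
  /\ (rho_eq r k ((k - 1) * #|V| + 1) <-> has_k_edge_disjoint_spanning_trees r k)
  /\ (rho_eq r k ((k - 1) * #|V| + 1) -> edge_conn_ge r k).
Proof.
have bound n : rho_set r k n -> n <= (k - 1) * #|V| + 1 := @rho_set_le _ _ _ hr k n.
have rho_eqE : rho_eq r k ((k - 1) * #|V| + 1) <-> rho_set r k ((k - 1) * #|V| + 1).
  by apply: is_sup_nat_attained bound _; rewrite addn1.
have treesE : rho_set r k ((k - 1) * #|V| + 1) <-> has_k_edge_disjoint_spanning_trees r k.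
  by split; [exact: rho_set_trees | exact: trees_rho_set (ltnW hk)].
split=> //; split; first exact: iff_trans rho_eqE treesE.
by move=> /rho_eqE /treesE; exact: trees_edge_conn.
Qed.
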